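(* Let $s\ge1$ be an integer and $c=N/D$ a rational with $1/(s+1)<c<1/s$ ($N,D$ positive integers). Put $a=(s+1-1/c)N$ and $b=(1/c-s)N$ (positive integers, assuming these are integral, e.g. after scaling $N,D$). For $p\in[0,1]$ let $g_p(x,y)=p\bigl(1-(1-x)^s\bigr)+(1-p)\bigl(1-(1-y)^{s+1}\bigr)$. Then there exists $p\in[0,1]$ such that $$\max\Bigl\{g_p(x,y):0\le x,y\le1,\ \tfrac{a}{a+b}\,s\,x+\tfrac{b}{a+b}\,(s+1)\,y=1\Bigr\}=\rho(c).$$
   Context: Definition of $\rho(c)$ for $1/(s+1)<c<1/s$: with $\sigma(\alpha,m)=\bigl(1-\alpha c-(1-\alpha)/m\bigr)^m$, there is a unique $\alpha^*\in(0,1)$ with $\sigma(\alpha^*,s)=\sigma(\alpha^*,s+1)$, and $\rho(c)=1-\sigma(\alpha^*,s)$. *)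

From mathcomp Require Import all_boot all_order all_algebra.
From mathcomp Require Import classical_sets reals.
Set Implicit Arguments. Unset Strict Implicit. Unset Printing Implicit Defensive.
Import Order.TTheory GRing.Theory Num.Theory.
Local Open Scope ring_scope.
Local Open Scope classical_set_scope.

Definition sigma (R : realType) (c alpha : R) (m : nat) : R :=
  (1 - alpha * c - (1 - alpha) / m%:R) ^+ m.

Definition rho (R : realType) (s : nat) (c : R) : R :=
  1 - sigma c (xget 0 [set alpha : R | 0 < alpha < 1 /\
                        sigma c alpha s = sigma c alpha s.+1]) s.

Definition gp (R : realType) (s : nat) (p x y : R) : R :=
  p * (1 - (1 - x) ^+ s) + (1 - p) * (1 - (1 - y) ^+ s.+1).

From mathcomp Require Import all_boot all_order all_algebra.
From mathcomp Require Import classical_sets reals.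
From mathcomp Require Import topology normedtype derive ring lra.
Set Implicit Arguments. Unset Strict Implicit. Unset Printing Implicit Defensive.
Import Order.TTheory GRing.Theory Num.Theory numFieldNormedType.Exports.
Local Open Scope ring_scope.

(* The maximum of the concave function g_p on the line
   lam s x + (1 - lam) (s + 1) y = 1 (with lam = s + 1 - 1/c = a/(a+b)) is
   attained where its gradient is normal to the line.  Take the point
   x0 = 1 - u, y0 = 1 - v where u = 1 - alpha0 c - (1 - alpha0)/s and
   v = 1 - alpha0 c - (1 - alpha0)/(s + 1): it lies on the line, and the
   weight p can be chosen so that the gradient of g_p at (x0, y0) is a
   multiple of (lam s, (1 - lam)(s + 1)).  Concavity (the tangent-line bound
   for t |-> t^m) then shows that (x0, y0) is the maximiser, and since
   u^s = v^(s+1) the value there is 1 - u^s = rho(c) whatever p is.  The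
   root alpha0 exists by the intermediate value theorem:
   sigma(1, s) = (1 - c)^s > sigma(1, s + 1) while
   sigma(0, s) = (1 - 1/s)^s < sigma(0, s + 1). *)

Lemma expr_tangent_le (R : realFieldType) (n : nat) (t u : R) :
  0 <= t -> 0 <= u -> u ^+ n.+1 + n.+1%:R * u ^+ n * (t - u) <= t ^+ n.+1.
Proof.
move=> t0 u0; elim: n => [|n IH]; first by rewrite !expr1 expr0; lra.
have IHt : t * (u ^+ n.+1 + n.+1%:R * u ^+ n * (t - u)) <= t ^+ n.+2.
  by rewrite [t ^+ n.+2]exprS ler_wpM2l.
have gap : t * (u ^+ n.+1 + n.+1%:R * u ^+ n * (t - u)) -
    (u ^+ n.+2 + n.+2%:R * u ^+ n.+1 * (t - u)) = n.+1%:R * u ^+ n * (t - u) ^+ 2.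
  by rewrite !exprS; ring.
have : 0 <= n.+1%:R * u ^+ n * (t - u) ^+ 2 by rewrite mulr_ge0 ?sqr_ge0 // mulr_ge0 ?exprn_ge0.
lra.
Qed.

Lemma expr_one_sub_invn_lt (R : realFieldType) (n : nat) :
  (1 - n.+1%:R^-1) ^+ n.+1 < (1 - n.+2%:R^-1) ^+ n.+2 :> R.
Proof.
set S := n.+1%:R : R.
have S1 : 1 <= S by rewrite ler1n.
have -> : n.+2%:R = S + 1 :> R by rewrite -natr1.
set q := 1 - S^-1; set r := 1 - (S + 1)^-1.
have q0 : 0 <= q by rewrite subr_ge0 invf_le1 //; lra.
have r0 : 0 <= r by rewrite subr_ge0 invf_le1 //; lra.
have qn0 : 0 < q ^+ n.
  have [->|n0] := posnP n; first by rewrite expr0.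
  by apply: exprn_gt0; rewrite subr_gt0 invf_lt1 ?ltr1n ?ltnS //; lra.
have bound : r * (q ^+ n.+1 + n.+1%:R * q ^+ n * (r - q)) <= r ^+ n.+2.
  by rewrite [r ^+ n.+2]exprS ler_wpM2l ?expr_tangent_le.
have gap : r * (q ^+ n.+1 + n.+1%:R * q ^+ n * (r - q)) - q ^+ n.+1 =
    q ^+ n / (S * (S + 1) ^+ 2).
  rewrite exprS /q /r -/S; field.
  by apply/andP; split; apply: lt0r_neq0; lra.
have : 0 < q ^+ n / (S * (S + 1) ^+ 2).
  by rewrite divr_gt0 // mulr_gt0 ?exprn_gt0; lra.
move: bound gap; set T := r * _; set W := q ^+ n / _; lra.
Qed.

Definition sigma_poly (R : realType) (c : R) (m : nat) : {poly R} :=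
  ((1 - m%:R^-1)%:P + (m%:R^-1 - c)%:P * 'X) ^+ m.

Lemma horner_sigma_poly (R : realType) (c alpha : R) (m : nat) :
  (sigma_poly c m).[alpha] = sigma c alpha m.
Proof. by rewrite /sigma_poly /sigma !hornerE; congr (_ ^+ _); ring. Qed.

Lemma sigma_root_exists (R : realType) (s : nat) (c : R) :
  (1 <= s)%N -> 0 < c -> c < s%:R^-1 ->
  exists alpha, 0 < alpha < 1 /\ sigma c alpha s = sigma c alpha s.+1.
Proof.
case: s => [//|n] _ c0 cs.
set f := fun alpha : R => sigma c alpha n.+1 - sigma c alpha n.+2.
have c1 : c < 1 by apply: (lt_le_trans cs); rewrite invf_le1 ?ler1n ?ltr0n.
have f1 : 0 < f 1.
  rewrite /f /sigma subrr !mul0r !subr0 !mul1r [_ ^+ n.+2]exprS.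
  have : 0 < (1 - c) ^+ n.+1 by rewrite exprn_gt0 // subr_gt0.
  nra.
have f0 : f 0 < 0.
  rewrite /f /sigma !subr0 !mul0r !subr0 !mul1r.
  by rewrite subr_lt0 expr_one_sub_invn_lt.
have f_cont : {within `[0, 1], continuous f}%classic.
  have -> : f = horner (sigma_poly c n.+1 - sigma_poly c n.+2).
    by apply: boolp.funext => a; rewrite hornerD hornerN !horner_sigma_poly.
  exact/continuous_subspaceT/continuous_horner.
have [alpha] : exists2 alpha, alpha \in `[0, 1] & f alpha = 0.
  apply: IVT => //.
  by rewrite min_l ?max_r ?ltW ?(lt_trans f0 f1) //= !ltW.
rewrite in_itv /= => /andP[a0 a1] falpha.
exists alpha; split; last by apply/eqP; rewrite -subr_eq0 -/(f alpha) falpha.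
rewrite !lt_def a0 a1 !andbT; apply/andP; split; apply/eqP => e.
- by rewrite e in falpha; lra.
- by rewrite -e in falpha; lra.
Qed.

Lemma sigma_base_itv (R : realFieldType) (m m' alpha c : R) :
  1 <= m <= m' -> 0 < alpha <= 1 -> 0 <= c < m^-1 ->
  0 < 1 - alpha * c - (1 - alpha) / m' <= 1.
Proof.
move=> /andP[m1 mm'] /andP[a0 a1] /andP[c0 cm].
have m0 : 0 < m by lra.
have invm : m^-1 <= 1 by rewrite invf_le1.
have invm' : m'^-1 <= m^-1 by rewrite lef_pV2 ?posrE //; lra.
have invm'0 : 0 < m'^-1 by rewrite invr_gt0; lra.
have : alpha * c < alpha * m^-1 by rewrite ltr_pM2l.
have : (1 - alpha) * m'^-1 <= (1 - alpha) * m^-1 by rewrite ler_wpM2l //; lra.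
have : 0 <= (1 - alpha) * m'^-1 by rewrite mulr_ge0 //; lra.
have : 0 <= alpha * c by rewrite mulr_ge0 //; lra.
nra.
Qed.

Lemma gp_le_tangent (R : realType) (n : nat) (p x y u v : R) :
  0 <= p <= 1 -> x <= 1 -> y <= 1 -> 0 <= u -> 0 <= v ->
  gp n.+1 p x y <= gp n.+1 p (1 - u) (1 - v)
    + p * n.+1%:R * u ^+ n * (x - (1 - u))
    + (1 - p) * n.+2%:R * v ^+ n.+1 * (y - (1 - v)).
Proof.
move=> /andP[p0 p1] x1 y1 u0 v0.
have Tx : u ^+ n.+1 + n.+1%:R * u ^+ n * ((1 - x) - u) <= (1 - x) ^+ n.+1.
  by rewrite expr_tangent_le // subr_ge0.
have Ty : v ^+ n.+2 + n.+2%:R * v ^+ n.+1 * ((1 - y) - v) <= (1 - y) ^+ n.+2.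
  by rewrite expr_tangent_le // subr_ge0.
rewrite -subr_ge0.
have -> : gp n.+1 p (1 - u) (1 - v) + p * n.+1%:R * u ^+ n * (x - (1 - u))
    + (1 - p) * n.+2%:R * v ^+ n.+1 * (y - (1 - v)) - gp n.+1 p x y =
    p * ((1 - x) ^+ n.+1 - (u ^+ n.+1 + n.+1%:R * u ^+ n * ((1 - x) - u)))
    + (1 - p) * ((1 - y) ^+ n.+2 - (v ^+ n.+2 + n.+2%:R * v ^+ n.+1 * ((1 - y) - v))).
  by rewrite /gp !subKr; ring.
by rewrite addr_ge0 // mulr_ge0 ?subr_ge0.
Qed.

(* The weight making the gradient of g_p at (1 - u, 1 - v), namely
   (p s u^(s-1), (1 - p)(s + 1) v^s), proportional to (lam s, (1 - lam)(s + 1)). *)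
Definition lagrange_weight (R : realFieldType) (n : nat) (lam u v : R) : R :=
  lam * v ^+ n.+1 / (lam * v ^+ n.+1 + (1 - lam) * u ^+ n).

Section LagrangeWeight.
Variables (R : realType) (n : nat) (lam u v : R).
Hypotheses (lam01 : 0 < lam < 1) (u0 : 0 < u) (v0 : 0 < v).

Let lagrange_denom_gt0 : 0 < lam * v ^+ n.+1 + (1 - lam) * u ^+ n.
Proof.
case/andP: lam01 => lam0 lam1.
have : 0 < lam * v ^+ n.+1 by rewrite mulr_gt0 ?exprn_gt0.
have : 0 <= (1 - lam) * u ^+ n by rewrite mulr_ge0 ?exprn_ge0 ?ltW //; lra.
lra.
Qed.

Lemma lagrange_weight_itv : 0 <= lagrange_weight n lam u v <= 1.
Proof.
case/andP: lam01 => lam0 lam1.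
have : 0 <= (1 - lam) * u ^+ n by rewrite mulr_ge0 ?exprn_ge0 ?ltW //; lra.
rewrite /lagrange_weight ler_pdivrMr // mul1r lerDl => -> /=.
by rewrite divr_ge0 ?(ltW lagrange_denom_gt0) // mulr_ge0 ?exprn_ge0 // ltW.
Qed.

Lemma gp_max_on_line (x y : R) :
  x <= 1 -> y <= 1 ->
  lam * n.+1%:R * x + (1 - lam) * n.+2%:R * y =
    lam * n.+1%:R * (1 - u) + (1 - lam) * n.+2%:R * (1 - v) ->
  gp n.+1 (lagrange_weight n lam u v) x y <=
    gp n.+1 (lagrange_weight n lam u v) (1 - u) (1 - v).
Proof.
move=> x1 y1 on_line; set p := lagrange_weight n lam u v.
apply: le_trans (gp_le_tangent n lagrange_weight_itv x1 y1 (ltW u0) (ltW v0)) _.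
rewrite -addrA gerDl.
have -> : p * n.+1%:R * u ^+ n * (x - (1 - u))
    + (1 - p) * n.+2%:R * v ^+ n.+1 * (y - (1 - v)) =
    u ^+ n * v ^+ n.+1 / (lam * v ^+ n.+1 + (1 - lam) * u ^+ n) *
    ((lam * n.+1%:R * x + (1 - lam) * n.+2%:R * y) -
     (lam * n.+1%:R * (1 - u) + (1 - lam) * n.+2%:R * (1 - v))).
  by rewrite /p /lagrange_weight; field; rewrite lt0r_neq0.
by rewrite on_line subrr mulr0.
Qed.

End LagrangeWeight.

Lemma gp_one_sub (R : realType) (n : nat) (p u v : R) :
  u ^+ n.+1 = v ^+ n.+2 -> gp n.+1 p (1 - u) (1 - v) = 1 - u ^+ n.+1.
Proof. by move=> uv; rewrite /gp !subKr -uv; ring. Qed.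

Theorem mainTheorem9 (R : realType) (s N D : nat)
  (hs : (1 <= s)%N) (hN : (0 < N)%N) (hD : (0 < D)%N) :
  let c : R := N%:R / D%:R in
  let a : R := (s.+1%:R - c^-1) * N%:R in
  let b : R := (c^-1 - s%:R) * N%:R in
  (s.+1%:R)^-1 < c -> c < (s%:R)^-1 ->
  exists p : R, 0 <= p <= 1 /\
    (exists x y : R, 0 <= x <= 1 /\ 0 <= y <= 1 /\
       a / (a + b) * s%:R * x + b / (a + b) * s.+1%:R * y = 1 /\
       gp s p x y = rho s c) /\
    (forall x y : R, 0 <= x <= 1 -> 0 <= y <= 1 ->
       a / (a + b) * s%:R * x + b / (a + b) * s.+1%:R * y = 1 ->
       gp s p x y <= rho s c).
Proof.
case: s hs => [//|n] hs c a b cs1 cs.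
have c0 : 0 < c by rewrite divr_gt0 ?ltr0n.
have [/andP[al0 al1] sigma_eq] := xgetPex 0 (sigma_root_exists hs c0 cs).
rewrite /rho; set alpha := xget _ _ in al0 al1 sigma_eq *.
set lam := n.+2%:R - c^-1.
have lam01 : 0 < lam < 1.
  have : c^-1 < n.+2%:R by rewrite invf_plt ?posrE ?ltr0n.
  have : n.+1%:R < c^-1 by rewrite -invf_pgt ?posrE ?ltr0n.
  rewrite /lam -(natr1 n.+1); lra.
have ab : a + b = N%:R by rewrite /a /b; ring.
have N0 : N%:R != 0 :> R by rewrite pnatr_eq0 -lt0n.
have -> : a / (a + b) = lam by rewrite ab /a mulfK.
have -> : b / (a + b) = 1 - lam.
  by rewrite ab /b mulfK // /lam -(natr1 n.+1); ring.
set u := 1 - alpha * c - (1 - alpha) / n.+1%:R.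
set v := 1 - alpha * c - (1 - alpha) / n.+2%:R.
have alpha_itv : 0 < alpha <= 1 by rewrite al0 ltW.
have c_itv : 0 <= c < n.+1%:R^-1 by rewrite ltW.
have /andP[u0 u1] : 0 < u <= 1.
  by apply: sigma_base_itv alpha_itv c_itv; rewrite lexx ler1n.
have /andP[v0 v1] : 0 < v <= 1.
  by apply: sigma_base_itv alpha_itv c_itv; rewrite ler1n ler_nat leqnSn.
have uv : u ^+ n.+1 = v ^+ n.+2 := sigma_eq.
have on_line : lam * n.+1%:R * (1 - u) + (1 - lam) * n.+2%:R * (1 - v) = 1.
  rewrite /lam /u /v; field.
  by have n0 := ler0n R n; rewrite !lt0r_neq0 //; lra.
exists (lagrange_weight n lam u v); split; first exact: lagrange_weight_itv.
rewrite -[sigma _ _ _]/(u ^+ n.+1) -(gp_one_sub (lagrange_weight n lam u v) uv).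
split.
- exists (1 - u), (1 - v); rewrite on_line; split; first by apply/andP; lra.
  by split; first by apply/andP; lra.
- move=> x y /andP[_ x1] /andP[_ y1] xy_line.
  by apply: gp_max_on_line; rewrite ?on_line.
Qed.
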